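(* Let $M,N\ge1$, $\mathbf y\in\mathbb{R}^M$, $\mathbf H\in\mathbb{R}^{M\times N}$ with $R=\operatorname{rank}(\mathbf H)\ge1$, and $\sigma_e^2>0$, $\sigma_\epsilon^2>0$. Let $\mathbf H=\mathbf U\boldsymbol\Sigma\mathbf V^{\mathrm T}$ be a singular value decomposition with nonzero singular values $\lambda_1\ge\cdots\ge\lambda_R>0$, and $\widetilde{\mathbf y}=\mathbf U^{\mathrm T}\mathbf y$. Consider the negative log-likelihood $$f(\mathbf x)=\frac{\|\mathbf y-\mathbf H\mathbf x\|_2^2}{2(\sigma_e^2\|\mathbf x\|_2^2+\sigma_\epsilon^2)}+\frac M2\log(\sigma_e^2\|\mathbf x\|_2^2+\sigma_\epsilon^2),\qquad \mathbf x\in\mathbb{R}^N,$$ and the optimization problem (P): minimize over $\mathbf w=(w_1,\dots,w_N)\in\mathbb{R}^N$ and $z>0$ $$\Phi(\mathbf w,z)=\sum_{j=1}^R\frac12\Big(\widetilde y_j^2 z+\lambda_j^2w_j-2|\widetilde y_j|\lambda_j\sqrt{w_jz}\Big)+\frac12\|\widetilde{\mathbf y}_{R+1:M}\|_2^2\,z-\frac M2\log z$$ subject to $\sigma_e^2\sum_{i=1}^N w_i+\sigma_\epsilon^2 z=1$ and $w_i\ge0$ for $i=1,\dots,N$. Then: (i) $\Phi$ is a convex function on $\{(\mathbf w,z):\mathbf w\ge\mathbf 0,\ z>0\}$, so (P) is a convex optimization problem; (ii) $\inf_{\mathbf x\in\mathbb{R}^N}f(\mathbf x)$ equals the optimal value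 of (P); (iii) strong duality holds for (P), i.e. the optimal value of (P) equals the optimal value of its Lagrangian dual problem (with multipliers for the equality constraint and the constraints $w_i\ge0$).
   Context: $\widetilde{\mathbf y}_{R+1:M}=(\widetilde y_{R+1},\dots,\widetilde y_M)^{\mathrm T}$; if $R=M$ it is empty and its squared norm is $0$. The function $f$ is, up to additive constants, the negative log-likelihood of $\mathbf x$ in the model $\mathbf y=(\mathbf H+\mathbf E)\mathbf x+\boldsymbol\epsilon$ with $\mathbf E$ having i.i.d. $\mathcal N(0,\sigma_e^2)$ entries and $\boldsymbol\epsilon\sim\mathcal N(\mathbf 0,\sigma_\epsilon^2\mathbf I_M)$ independent. *)

From HB Require Import structures.
From mathcomp Require Import all_boot all_order all_algebra.
From mathcomp Require Import all_classical all_reals.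
From mathcomp Require Import ereal exp.
Set Implicit Arguments. Unset Strict Implicit. Unset Printing Implicit Defensive.
Import Order.TTheory GRing.Theory Num.Theory.
Local Open Scope ring_scope.
Local Open Scope classical_set_scope.

Section Defs.
Variable R : realType.

Definition sqnorm n (v : 'cV[R]_n) : R := \sum_(i < n) v i 0 ^+ 2.

(* k-th entry (0-based, nat index) of a column vector; 0 if out of range *)
Definition ventry n (v : 'cV[R]_n) (k : nat) : R :=
  if insub k is Some i then v i 0 else 0.

Definition svd_Sigma M N (lam : nat -> R) (r : nat) : 'M[R]_(M, N) :=
  \matrix_(i < M, j < N) (if ((i : nat) == j) && (i < r)%N then lam i else 0).

Definition nll M N (y : 'cV[R]_M) (H : 'M[R]_(M, N)) (se2 sn2 : R)
  (x : 'cV[R]_N) : R :=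
  sqnorm (y - H *m x) / (2 * (se2 * sqnorm x + sn2))
  + (M%:R / 2) * ln (se2 * sqnorm x + sn2).

(* objective Phi of (P); ytil = U^T y, lam the nonzero singular values, r the rank *)
Definition Phi M N (ytil : 'cV[R]_M) (lam : nat -> R) (r : nat)
  (w : 'cV[R]_N) (z : R) : R :=
  \sum_(j < r) (1/2) * (ventry ytil j ^+ 2 * z + lam j ^+ 2 * ventry w j
        - 2 * `|ventry ytil j| * lam j * Num.sqrt (ventry w j * z))
  + (1/2) * (\sum_(i < M | (r <= i)%N) ytil i 0 ^+ 2) * z
  - (M%:R / 2) * ln z.

Definition domP N (w : 'cV[R]_N) (z : R) : Prop :=
  (forall i, 0 <= w i 0) /\ 0 < z.

Definition feasP N (se2 sn2 : R) (w : 'cV[R]_N) (z : R) : Prop :=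
  domP w z /\ se2 * (\sum_(i < N) w i 0) + sn2 * z = 1.

(* Lagrangian of (P): nu for the equality constraint, mu_i for -w_i <= 0 *)
Definition Lagr M N (ytil : 'cV[R]_M) (lam : nat -> R) (r : nat) (se2 sn2 : R)
  (w : 'cV[R]_N) (z : R) (nu : R) (mu : 'cV[R]_N) : R :=
  Phi ytil lam r w z + nu * (se2 * (\sum_(i < N) w i 0) + sn2 * z - 1)
  - \sum_(i < N) mu i 0 * w i 0.

Definition dualfun M N (ytil : 'cV[R]_M) (lam : nat -> R) (r : nat) (se2 sn2 : R)
  (nu : R) (mu : 'cV[R]_N) : \bar R :=
  ereal_inf [set e | exists (w : 'cV[R]_N) (z : R),
     domP w z /\ e = (Lagr ytil lam r se2 sn2 w z nu mu)%:E].

End Defs.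

From HB Require Import structures.
From mathcomp Require Import all_boot all_order all_algebra.
From mathcomp Require Import all_classical all_reals.
From mathcomp Require Import ereal exp.
From mathcomp Require Import ring lra.
Import Order.TTheory GRing.Theory Num.Theory.
Local Open Scope ring_scope.
Local Open Scope classical_set_scope.

(* Rotating by the singular vectors (x' = V^T x, y' = U^T y) leaves f unchanged and makes
   the model diagonal.  The substitution z = 1/(se2 |x'|^2 + sn2), w_k = x'_k^2 z maps R^N
   onto the feasible set of (P) and turns f into Phi plus the nonnegative gap
   z * sum_j lam_j (|y'_j| |x'_j| - y'_j x'_j); conversely x'_k = sign(y'_k) sqrt(w_k / z)
   recovers any feasible (w, z) with zero gap, so the two infima coincide.  Phi is convex
   because sqrt(w z) and ln z are concave.  For strong duality, (P) has a single affine
   constraint g = 1, attained strictly on both sides by domain points (Slater), and Phi is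
   bounded below on it; by convexity every slope (p - Phi)/(1 - g) taken where g < 1 is at
   most every slope (Phi - p)/(g - 1) taken where g > 1, and minus the supremum of the
   former is a Lagrange multiplier nu.  The dual function at (nu, 0) then reaches the
   primal value, and weak duality gives the reverse inequality. *)

Section Concavity.
Context {R : realType}.

Lemma ln_concave (a b t : R) : 0 < a -> 0 < b -> 0 <= t <= 1 ->
  t * ln a + (1 - t) * ln b <= ln (t * a + (1 - t) * b).
Proof. by move=> a0 b0 /andP[t0 t1]; exact: (concave_ln (Itv01 t0 t1) a0 b0). Qed.

Lemma sqrt_mul_concave (w1 w2 z1 z2 t : R) :
  0 <= w1 -> 0 <= w2 -> 0 <= z1 -> 0 <= z2 -> 0 <= t <= 1 ->
  t * Num.sqrt (w1 * z1) + (1 - t) * Num.sqrt (w2 * z2) <=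
  Num.sqrt ((t * w1 + (1 - t) * w2) * (t * z1 + (1 - t) * z2)).
Proof.
have sqr_of_ge0 (v : R) : 0 <= v -> exists2 s, 0 <= s & v = s ^+ 2.
  by move=> v0; exists (Num.sqrt v); rewrite ?sqrtr_ge0 ?sqr_sqrtr.
move=> /sqr_of_ge0[a a0 ->] /sqr_of_ge0[c c0 ->] /sqr_of_ge0[b b0 ->] /sqr_of_ge0[d d0 ->].
move=> /andP[t0 t1].
rewrite -!exprMn !sqrtr_sqr !ger0_norm ?mulr_ge0 //.
have lhs_ge0 : 0 <= t * (a * b) + (1 - t) * (c * d).
  by rewrite addr_ge0 // mulr_ge0 ?subr_ge0 // mulr_ge0.
rewrite -(ger0_norm lhs_ge0) -sqrtr_sqr ler_wsqrtr // -subr_ge0.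
have -> : (t * a ^+ 2 + (1 - t) * c ^+ 2) * (t * b ^+ 2 + (1 - t) * d ^+ 2)
          - (t * (a * b) + (1 - t) * (c * d)) ^+ 2 = t * (1 - t) * (a * d - c * b) ^+ 2.
  by ring.
by rewrite mulr_ge0 ?sqr_ge0 // mulr_ge0 // subr_ge0.
Qed.

End Concavity.

Section AffineConstraintMultiplier.
Variables (R : realType) (T : Type) (D : T -> Prop) (phi g : T -> R) (p : R).
Hypothesis convex_phi_g : forall {P1 P2 t}, D P1 -> D P2 -> 0 <= t <= 1 ->
  exists P, [/\ D P, g P = t * g P1 + (1 - t) * g P2
              & phi P <= t * phi P1 + (1 - t) * phi P2].
Hypothesis p_lb : forall {P}, D P -> g P = 1 -> p <= phi P.

Lemma slope_le_slope P1 P2 : D P1 -> D P2 -> g P1 < 1 -> 1 < g P2 ->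
  (p - phi P1) / (1 - g P1) <= (phi P2 - p) / (g P2 - 1).
Proof.
move=> DP1 DP2 gP1 gP2.
rewrite ler_pdivrMr ?subr_gt0 // mulrAC ler_pdivlMr ?subr_gt0 //.
have d_gt0 : 0 < g P2 - g P1 by rewrite subr_gt0 (lt_trans gP1).
have d_neq0 : g P2 - g P1 != 0 by rewrite gt_eqF.
pose t := (g P2 - 1) / (g P2 - g P1).
have t01 : 0 <= t <= 1.
  by rewrite divr_ge0 ?(ltW d_gt0) ?subr_ge0 ?(ltW gP2) //= ler_pdivrMr // mul1r; lra.
have [P [DP gP phiP]] := convex_phi_g DP1 DP2 t01.
have gP_eq1 : g P = 1 by rewrite gP /t; field.
have := ler_wpM2r (ltW d_gt0) (le_trans (p_lb DP gP_eq1) phiP).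
have -> : (t * phi P1 + (1 - t) * phi P2) * (g P2 - g P1)
          = (g P2 - 1) * phi P1 + (1 - g P1) * phi P2 by rewrite /t; field.
nra.
Qed.

Lemma affine_constraint_multiplier :
  (exists P1, D P1 /\ g P1 < 1) -> (exists P2, D P2 /\ 1 < g P2) ->
  exists nu, forall P, D P -> p <= phi P + nu * (g P - 1).
Proof.
move=> [P1 [DP1 gP1]] [P2 [DP2 gP2]].
pose slopes := [set (p - phi P) / (1 - g P) | P in [set P | D P /\ g P < 1]].
have slopes_ub P : D P -> 1 < g P -> ubound slopes ((phi P - p) / (g P - 1)).
  by move=> DP gP _ [Q [DQ gQ] <-]; exact: slope_le_slope.
have slopes_sup : has_sup slopes.
  split; first by exists ((p - phi P1) / (1 - g P1)), P1.
  by exists ((phi P2 - p) / (g P2 - 1)); exact: slopes_ub.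
exists (- sup slopes) => P DP.
case: (ltgtP (g P) 1) => gP.
- have : (p - phi P) / (1 - g P) <= sup slopes by apply: sup_upper_bound => //; exists P.
  rewrite ler_pdivrMr ?subr_gt0 //; nra.
- have : sup slopes <= (phi P - p) / (g P - 1).
    by apply: ge_sup (slopes_ub P DP gP); case: slopes_sup.
  rewrite ler_pdivlMr ?subr_gt0 //; nra.
- by rewrite gP subrr mulr0 addr0; apply: p_lb.
Qed.

End AffineConstraintMultiplier.

Section Ventry.
Context {R : realType} {n : nat}.
Implicit Types (u v : 'cV[R]_n).

Lemma ventryE v (i : 'I_n) : ventry v i = v i 0.
Proof. by rewrite /ventry valK. Qed.

Lemma ventryD u v k : ventry (u + v) k = ventry u k + ventry v k.
Proof. by rewrite /ventry; case: insubP => [i _ _|_]; rewrite ?mxE ?addr0. Qed.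

Lemma ventryZ a v k : ventry (a *: v) k = a * ventry v k.
Proof. by rewrite /ventry; case: insubP => [i _ _|_]; rewrite ?mxE ?mulr0. Qed.

Lemma ventry_map (f : R -> R) v k : f 0 = 0 -> ventry (map_mx f v) k = f (ventry v k).
Proof. by rewrite /ventry; case: insubP => [i _ _|_]; rewrite ?mxE. Qed.

Lemma ventry_col (F : nat -> R) k :
  ventry (\col_(i < n) F i) k = if (k < n)%N then F k else 0.
Proof. by rewrite /ventry; case: insubP => [i -> <-|/negbTE ->]; rewrite ?mxE. Qed.

Lemma ventry_ge0 v k : (forall i, 0 <= v i 0) -> 0 <= ventry v k.
Proof. by rewrite /ventry; case: insubP. Qed.

End Ventry.

Section PhiTerm.
Context {R : realType}.

Definition phi_term (Y l w z : R) : R :=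
  (1/2) * (Y ^+ 2 * z + l ^+ 2 * w - 2 * `|Y| * l * Num.sqrt (w * z)).

Lemma PhiE M N (yt : 'cV[R]_M) (lam : nat -> R) r (w : 'cV[R]_N) z :
  Phi yt lam r w z =
  \sum_(j < r) phi_term (ventry yt j) (lam j) (ventry w j) z
  + (1/2) * (\sum_(i < M | (r <= i)%N) yt i 0 ^+ 2) * z - (M%:R / 2) * ln z.
Proof. by []. Qed.

Lemma phi_term_ge0 Y l w z : 0 <= w -> 0 <= z -> 0 <= phi_term Y l w z.
Proof.
move=> w0 z0; rewrite /phi_term sqrtrM //.
have -> : Y ^+ 2 * z + l ^+ 2 * w - 2 * `|Y| * l * (Num.sqrt w * Num.sqrt z)
          = (`|Y| * Num.sqrt z - l * Num.sqrt w) ^+ 2.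
  by rewrite -[Y ^+ 2]real_normK ?num_real // -{1}(sqr_sqrtr z0) -{1}(sqr_sqrtr w0); ring.
by rewrite mulr_ge0 ?sqr_ge0.
Qed.

Lemma phi_term_convex Y l w1 w2 z1 z2 t : 0 <= l ->
  0 <= w1 -> 0 <= w2 -> 0 <= z1 -> 0 <= z2 -> 0 <= t <= 1 ->
  phi_term Y l (t * w1 + (1 - t) * w2) (t * z1 + (1 - t) * z2)
  <= t * phi_term Y l w1 z1 + (1 - t) * phi_term Y l w2 z2.
Proof.
move=> l0 w10 w20 z10 z20 t01.
have := sqrt_mul_concave _ _ _ _ _ w10 w20 z10 z20 t01.
have coef_ge0 : 0 <= 2 * `|Y| * l by rewrite !mulr_ge0.
move=> /(ler_wpM2l coef_ge0); rewrite /phi_term.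
set s := Num.sqrt (_ * (t * z1 + _)); set s1 := Num.sqrt (w1 * z1).
set s2 := Num.sqrt (w2 * z2); set K := 2 * `|Y| * l.
nra.
Qed.

Lemma phi_term_sqr (Y l X z : R) : 0 <= z ->
  (Y - l * X) ^+ 2 * (z / 2)
  = phi_term Y l (X ^+ 2 * z) z + l * z * (`|Y| * `|X| - Y * X).
Proof.
move=> z0; rewrite /phi_term.
have -> : X ^+ 2 * z * z = (`|X| * z) ^+ 2.
  by rewrite exprMn real_normK ?num_real //; ring.
by rewrite sqrtr_sqr [`|_ * z|]ger0_norm ?mulr_ge0 //; field.
Qed.

End PhiTerm.

Lemma ereal_inf_le_dominated {R : realType} (A B : set \bar R) :
  (forall a, A a -> exists2 b, B b & (b <= a)%E) -> (ereal_inf B <= ereal_inf A)%E.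
Proof. by move=> AB; apply: le_ereal_inf_tmp => a /AB; exact: ge_ereal_inf. Qed.

Section OrthogonalInvariance.
Context {R : realType}.

Lemma sqnorm_ge0 n (v : 'cV[R]_n) : 0 <= sqnorm v.
Proof. by apply: sumr_ge0 => i _; exact: sqr_ge0. Qed.

Lemma sqnormE n (v : 'cV[R]_n) : sqnorm v = (v^T *m v) 0 0.
Proof. by rewrite /sqnorm mxE; apply: eq_bigr => i _; rewrite mxE expr2. Qed.

Lemma sqnorm_orthomx n (U : 'M[R]_n) (v : 'cV[R]_n) :
  U^T *m U = 1%:M -> sqnorm (U *m v) = sqnorm v.
Proof. by move=> UU; rewrite !sqnormE trmx_mul -mulmxA (mulmxA U^T) UU mul1mx. Qed.

Lemma nll_orthomx M N (y : 'cV[R]_M) (S : 'M[R]_(M, N)) se2 sn2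
    (U : 'M[R]_M) (V : 'M[R]_N) (x : 'cV[R]_N) :
  U^T *m U = 1%:M -> V^T *m V = 1%:M ->
  nll y (U *m S *m V^T) se2 sn2 x = nll (U^T *m y) S se2 sn2 (V^T *m x).
Proof.
move=> UU VV.
have residual : y - U *m S *m V^T *m x = U *m (U^T *m y - S *m (V^T *m x)).
  by rewrite mulmxBr (mulmxA U U^T) (mulmx1C UU) mul1mx !mulmxA.
have norm_x : sqnorm x = sqnorm (V^T *m x).
  by rewrite -{1}(mul1mx x) -(mulmx1C VV) -mulmxA sqnorm_orthomx.
by rewrite /nll residual sqnorm_orthomx // norm_x.
Qed.

End OrthogonalInvariance.

Section DiagonalModel.
Context {R : realType} {M N : nat}.
Variables (yt : 'cV[R]_M) (lam : nat -> R) (r : nat) (se2 sn2 : R).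
Hypotheses (r_le_M : (r <= M)%N) (r_le_N : (r <= N)%N).
Hypotheses (se2_gt0 : 0 < se2) (sn2_gt0 : 0 < sn2).

Let Sigma := svd_Sigma M N lam r.
Let c := \sum_(i < M | (r <= i)%N) yt i 0 ^+ 2.

Lemma svd_SigmaE (x : 'cV[R]_N) (i : 'I_M) :
  (Sigma *m x) i 0 = if (i < r)%N then lam i * ventry x i else 0.
Proof.
rewrite mxE; case: ifP => ir; last by rewrite big1 // => k _; rewrite mxE ir andbF mul0r.
have iN : (i < N)%N := leq_trans ir r_le_N.
rewrite (bigD1 (Ordinal iN)) //= big1 ?addr0 => [|k kNi].
  by rewrite mxE eqxx ir -[i : nat]/(val (Ordinal iN)) ventryE.
rewrite mxE; case: eqP => [ik|]; last by rewrite mul0r.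
by move: kNi; rewrite -val_eqE /= -ik eqxx.
Qed.

Lemma sqnorm_residual (x : 'cV[R]_N) :
  sqnorm (yt - Sigma *m x) = \sum_(j < r) (ventry yt j - lam j * ventry x j) ^+ 2 + c.
Proof.
rewrite /sqnorm (bigID (fun i : 'I_M => (i < r)%N)) /=; congr (_ + _).
  rewrite (big_ord_widen M (fun j => (ventry yt j - lam j * ventry x j) ^+ 2)) //.
  by apply: eq_bigr => i ir; rewrite 2!mxE svd_SigmaE ir ventryE.
apply: eq_big => [i|i ri]; first by rewrite -leqNgt.
by rewrite 2!mxE svd_SigmaE (negbTE ri) subr0.
Qed.

Definition z_of (x : 'cV[R]_N) : R := (se2 * sqnorm x + sn2)^-1.
Definition w_of (x : 'cV[R]_N) : 'cV[R]_N := map_mx (fun a => a ^+ 2 * z_of x) x.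

Let noise_gt0 (x : 'cV[R]_N) : 0 < se2 * sqnorm x + sn2.
Proof. by rewrite ltr_wpDl // mulr_ge0 ?sqnorm_ge0 ?ltW. Qed.

Lemma z_of_gt0 x : 0 < z_of x.
Proof. by rewrite invr_gt0. Qed.

Lemma feasP_of x : feasP se2 sn2 (w_of x) (z_of x).
Proof.
split; first by split; [move=> i; rewrite mxE mulr_ge0 ?sqr_ge0 ?ltW ?z_of_gt0|exact: z_of_gt0].
have -> : \sum_(i < N) w_of x i 0 = sqnorm x * z_of x.
  by rewrite /sqnorm mulr_suml; apply: eq_bigr => i _; rewrite mxE.
by rewrite mulrA -mulrDl mulfV // gt_eqF.
Qed.

Lemma nll_diagE x :
  nll yt Sigma se2 sn2 x = Phi yt lam r (w_of x) (z_of x)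
  + z_of x * \sum_(j < r) lam j * (`|ventry yt j| * `|ventry x j| - ventry yt j * ventry x j).
Proof.
have z_gt0 := z_of_gt0 x.
have terms : \sum_(j < r) (ventry yt j - lam j * ventry x j) ^+ 2 * (z_of x / 2)
  = \sum_(j < r) phi_term (ventry yt j) (lam j) (ventry (w_of x) j) (z_of x)
    + z_of x * \sum_(j < r) lam j * (`|ventry yt j| * `|ventry x j| - ventry yt j * ventry x j).
  rewrite mulr_sumr -big_split; apply: eq_bigr => j _.
  by rewrite ventry_map ?expr0n ?mul0r // phi_term_sqr ?ltW // mulrA (mulrC (z_of x)).
rewrite /nll sqnorm_residual PhiE -/c.
rewrite -[se2 * _ + sn2]invrK -/(z_of x) lnV ?posrE // invfM invrK (mulrC _ (z_of x)).
rewrite mulrDl mulr_suml {}terms.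
set P := \sum_(j < r) _; set G := \sum_(j < r) _.
by field.
Qed.

Lemma Phi_le_nll_diag x : (forall j, (j < r)%N -> 0 <= lam j) ->
  Phi yt lam r (w_of x) (z_of x) <= nll yt Sigma se2 sn2 x.
Proof.
move=> lam_ge0; rewrite nll_diagE lerDl mulr_ge0 //; first exact/ltW/z_of_gt0.
apply: sumr_ge0 => j _; rewrite mulr_ge0 ?lam_ge0 // subr_ge0 -normrM.
exact: ler_norm.
Qed.

Lemma nll_diag_attains_Phi (w : 'cV[R]_N) z : feasP se2 sn2 w z ->
  exists x, nll yt Sigma se2 sn2 x = Phi yt lam r w z.
Proof.
move=> [[w_ge0 z_gt0] constraint].
pose F (k : nat) : R := (-1) ^+ (ventry yt k < 0)%R * Num.sqrt (ventry w k / z).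
pose x := \col_(k < N) F k.
have x_sqr (k : 'I_N) : x k 0 ^+ 2 = w k 0 / z.
  by rewrite mxE /F exprMn sqrr_sign mul1r ventryE sqr_sqrtr // divr_ge0 // ltW.
have z_ofE : z_of x = z.
  have sqnorm_x : sqnorm x = (\sum_(i < N) w i 0) / z.
    by rewrite /sqnorm mulr_suml; apply: eq_bigr => i _; rewrite x_sqr.
  rewrite /z_of sqnorm_x -[X in X^-1 = _]divr1 -constraint invf_div.
  by field; rewrite gt_eqF //= constraint oner_neq0.
have w_ofE : w_of x = w.
  by apply/matrixP => i j; rewrite ord1 mxE x_sqr z_ofE divfK // lt0r_neq0.
exists x; rewrite nll_diagE z_ofE w_ofE big1 ?mulr0 ?addr0 // => j _.
rewrite ventry_col; case: ifP => _; last by rewrite normr0 !mulr0 subrr mulr0.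
rewrite /F normrM normr_sign mul1r ger0_norm ?sqrtr_ge0 //.
by rewrite mulrA [ventry yt j * _]mulrC -normrEsign subrr mulr0.
Qed.

End DiagonalModel.

Lemma inf_nll_eq_inf_Phi {R : realType} {M N : nat} (y : 'cV[R]_M) se2 sn2
    (U : 'M[R]_M) (V : 'M[R]_N) (lam : nat -> R) (r : nat) :
  U^T *m U = 1%:M -> V^T *m V = 1%:M -> (r <= M)%N -> (r <= N)%N ->
  0 < se2 -> 0 < sn2 -> (forall j, (j < r)%N -> 0 <= lam j) ->
  ereal_inf [set (nll y (U *m svd_Sigma M N lam r *m V^T) se2 sn2 x)%:E
             | x in [set: 'cV[R]_N]]
  = ereal_inf [set e | exists (w : 'cV[R]_N) (z : R),
                 feasP se2 sn2 w z /\ e = (Phi (U^T *m y) lam r w z)%:E].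
Proof.
move=> UU VV r_le_M r_le_N se2_gt0 sn2_gt0 lam_ge0.
apply/eqP; rewrite eq_le; apply/andP; split; apply: ereal_inf_le_dominated.
- move=> _ [w [z [feas ->]]].
  have [x nllE] :=
    nll_diag_attains_Phi (U^T *m y) lam _ _ _ r_le_M r_le_N se2_gt0 sn2_gt0 _ _ feas.
  exists (nll y (U *m svd_Sigma M N lam r *m V^T) se2 sn2 (V *m x))%:E; first by exists (V *m x).
  by rewrite nll_orthomx // mulmxA VV mul1mx nllE.
- move=> _ [x _ <-].
  exists (Phi (U^T *m y) lam r (w_of se2 sn2 (V^T *m x)) (z_of se2 sn2 (V^T *m x)))%:E.
    by exists (w_of se2 sn2 (V^T *m x)), (z_of se2 sn2 (V^T *m x)); split => //; exact: feasP_of.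
  by rewrite lee_fin nll_orthomx //; exact: Phi_le_nll_diag.
Qed.

Lemma domP_convex {R : realType} {N : nat} (w1 w2 : 'cV[R]_N) (z1 z2 t : R) :
  domP w1 z1 -> domP w2 z2 -> 0 <= t <= 1 ->
  domP (t *: w1 + (1 - t) *: w2) (t * z1 + (1 - t) * z2).
Proof.
move=> [w1_ge0 z1_gt0] [w2_ge0 z2_gt0] /andP[t_ge0 t_le1]; split.
  by move=> i; rewrite !mxE addr_ge0 // mulr_ge0 // subr_ge0.
have [->|t_neq0] := eqVneq t 0; first by rewrite mul0r add0r subr0 mul1r.
have t_gt0 : 0 < t by rewrite lt_def t_neq0.
have : 0 <= (1 - t) * z2 by rewrite mulr_ge0 ?subr_ge0 // ltW.
have := mulr_gt0 t_gt0 z1_gt0.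
lra.
Qed.

Section ProblemP.
Context {R : realType} {M N : nat}.
Variables (yt : 'cV[R]_M) (lam : nat -> R) (r : nat) (se2 sn2 : R).
Hypotheses (se2_gt0 : 0 < se2) (sn2_gt0 : 0 < sn2).
Hypothesis lam_ge0 : forall j, (j < r)%N -> 0 <= lam j.

Let c := \sum_(i < M | (r <= i)%N) yt i 0 ^+ 2.

Lemma Phi_convex (w1 w2 : 'cV[R]_N) (z1 z2 t : R) :
  domP w1 z1 -> domP w2 z2 -> 0 <= t <= 1 ->
  Phi yt lam r (t *: w1 + (1 - t) *: w2) (t * z1 + (1 - t) * z2)
    <= t * Phi yt lam r w1 z1 + (1 - t) * Phi yt lam r w2 z2.
Proof.
move=> [w1_ge0 z1_gt0] [w2_ge0 z2_gt0] t01.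
pose terms (w : 'cV[R]_N) z := \sum_(j < r) phi_term (ventry yt j) (lam j) (ventry w j) z.
have sum_convex : terms (t *: w1 + (1 - t) *: w2) (t * z1 + (1 - t) * z2)
                  <= t * terms w1 z1 + (1 - t) * terms w2 z2.
  rewrite !mulr_sumr -big_split; apply: ler_sum => j _.
  rewrite ventryD !ventryZ; apply: phi_term_convex => //; first exact: lam_ge0.
  - exact: ventry_ge0.
  - exact: ventry_ge0.
  - exact: ltW.
  - exact: ltW.
have K_ge0 : 0 <= M%:R / 2 :> R by rewrite divr_ge0.
have ln_concave_K := ler_wpM2l K_ge0 (ln_concave _ _ _ z1_gt0 z2_gt0 t01).
rewrite !PhiE -/c.
move: sum_convex ln_concave_K; rewrite /terms.
set A := \sum_(j < r) _; set A1 := \sum_(j < r) _; set A2 := \sum_(j < r) _.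
set K := M%:R / 2.
nra.
Qed.

Lemma Phi_ge_feasible (w : 'cV[R]_N) z : feasP se2 sn2 w z ->
  (M%:R / 2) * ln sn2 <= Phi yt lam r w z.
Proof.
move=> [[w_ge0 z_gt0] feas_eq].
have z_le : z <= sn2^-1.
  rewrite -(ler_pM2l sn2_gt0) mulfV ?gt_eqF // -feas_eq lerDr.
  by rewrite mulr_ge0 ?sumr_ge0 // ltW.
have ln_z_le : ln z <= - ln sn2 by rewrite -lnV ?posrE // ler_ln ?posrE ?invr_gt0.
have terms_ge0 : 0 <= \sum_(j < r) phi_term (ventry yt j) (lam j) (ventry w j) z.
  by apply: sumr_ge0 => j _; rewrite phi_term_ge0 ?ventry_ge0 // ltW.
have cz_ge0 : 0 <= (1/2) * c * z.
  by rewrite !mulr_ge0 ?sumr_ge0 // => [i _|]; [exact: sqr_ge0|exact: ltW].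
have K_ge0 : 0 <= M%:R / 2 :> R by rewrite divr_ge0.
rewrite PhiE -/c; move: (ler_wpM2l K_ge0 ln_z_le); nra.
Qed.

Lemma Lagr_le_Phi (w : 'cV[R]_N) z nu (mu : 'cV[R]_N) :
  feasP se2 sn2 w z -> (forall i, 0 <= mu i 0) ->
  Lagr yt lam r se2 sn2 w z nu mu <= Phi yt lam r w z.
Proof.
move=> [[w_ge0 _] feas_eq] mu_ge0; rewrite /Lagr feas_eq subrr mulr0 addr0 lerBlDr lerDl.
by apply: sumr_ge0 => i _; rewrite mulr_ge0.
Qed.

Let domP0 z : 0 < z -> domP (0 : 'cV[R]_N) z.
Proof. by split => // i; rewrite mxE. Qed.

Let constraint0 z : se2 * (\sum_(i < N) (0 : 'cV[R]_N) i 0) + sn2 * z = sn2 * z.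
Proof. by rewrite big1 ?mulr0 ?add0r // => i _; rewrite mxE. Qed.

Lemma exists_multiplier (p : R) :
  (forall (w : 'cV[R]_N) z, feasP se2 sn2 w z -> p <= Phi yt lam r w z) ->
  exists nu, forall (w : 'cV[R]_N) z, domP w z -> p <= Lagr yt lam r se2 sn2 w z nu 0.
Proof.
move=> p_le_Phi.
have [nu nuP] : exists nu, forall P : 'cV[R]_N * R, domP P.1 P.2 ->
    p <= Phi yt lam r P.1 P.2 + nu * (se2 * (\sum_(i < N) P.1 i 0) + sn2 * P.2 - 1).
  apply: affine_constraint_multiplier.
  - move=> [w1 z1] [w2 z2] t /= dom1 dom2 t01.
    exists (t *: w1 + (1 - t) *: w2, t * z1 + (1 - t) * z2); split => /=.
    + exact: domP_convex.
    + rewrite (eq_bigr (fun i => t * w1 i 0 + (1 - t) * w2 i 0)) => [|i _]; last by rewrite !mxE.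
      by rewrite big_split /= -!mulr_sumr; ring.
    + exact: Phi_convex.
  - by move=> [w z] /= dom feas_eq; apply: p_le_Phi.
  - exists (0, (2 * sn2)^-1); split; first by apply: domP0; rewrite invr_gt0 mulr_gt0.
    by rewrite /= constraint0 invfM mulrCA mulfV ?gt_eqF // mulr1 invf_lt1 ?ltr1n.
  - exists (0, 2 * sn2^-1); split; first by apply: domP0; rewrite mulr_gt0 ?invr_gt0.
    by rewrite /= constraint0 mulrCA mulfV ?gt_eqF // mulr1 ltr1n.
exists nu => w z dom.
have no_mu : \sum_(i < N) (0 : 'cV[R]_N) i 0 * w i 0 = 0.
  by rewrite big1 // => i _; rewrite mxE mul0r.
by rewrite /Lagr no_mu subr0; exact: (nuP (w, z)).
Qed.

Let primal := [set e | exists (w : 'cV[R]_N) (z : R),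
                 feasP se2 sn2 w z /\ e = (Phi yt lam r w z)%:E].

Lemma primal_fin_num : ereal_inf primal \is a fin_num.
Proof.
pose o : 'cV[R]_N := 0.
have feas0 : feasP se2 sn2 o sn2^-1.
  by split; [apply: domP0; rewrite invr_gt0|rewrite constraint0 mulfV ?gt_eqF].
have primal_lb : ((M%:R / 2 * ln sn2)%:E <= ereal_inf primal)%E.
  by apply: le_ereal_inf_tmp => _ [w [z [feas ->]]]; rewrite lee_fin Phi_ge_feasible.
have primal_ub : (ereal_inf primal <= (Phi yt lam r o sn2^-1)%:E)%E.
  by apply: ge_ereal_inf; exists (Phi yt lam r o sn2^-1)%:E => //; exists o, sn2^-1.
by rewrite fin_real // (lt_le_trans (ltNyr _) primal_lb) (le_lt_trans primal_ub (ltry _)).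
Qed.

Lemma strong_duality :
  ereal_inf primal = ereal_sup [set e | exists (nu : R) (mu : 'cV[R]_N),
                         (forall i, 0 <= mu i 0) /\ e = dualfun yt lam r se2 sn2 nu mu].
Proof.
set p := fine (ereal_inf primal).
have pE : ereal_inf primal = p%:E by rewrite fineK ?primal_fin_num.
have p_le_Phi (w : 'cV[R]_N) z : feasP se2 sn2 w z -> p <= Phi yt lam r w z.
  move=> feas; rewrite -lee_fin -pE.
  by apply: ge_ereal_inf; exists (Phi yt lam r w z)%:E => //; exists w, z.
have [nu nuP] := exists_multiplier _ p_le_Phi.
apply/eqP; rewrite eq_le; apply/andP; split.
- apply: le_ereal_sup_tmp; exists (dualfun yt lam r se2 sn2 nu (0 : 'cV[R]_N)).
    by exists nu, 0; split => // i; rewrite mxE.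
  by rewrite pE; apply: le_ereal_inf_tmp => _ [w [z [dom ->]]]; rewrite lee_fin nuP.
- apply: ge_ereal_sup => _ [nu' [mu [mu_ge0 ->]]].
  apply: le_ereal_inf_tmp => _ [w [z [feas ->]]].
  apply: ge_ereal_inf; exists (Lagr yt lam r se2 sn2 w z nu' mu)%:E.
    by exists w, z; split => //; case: feas.
  by rewrite lee_fin Lagr_le_Phi.
Qed.

End ProblemP.

Theorem mainTheorem3 (R : realType) (M N : nat)
  (y : 'cV[R]_M) (H : 'M[R]_(M, N)) (se2 sn2 : R)
  (U : 'M[R]_M) (V : 'M[R]_N) (lam : nat -> R) :
  (0 < M)%N -> (0 < N)%N -> (1 <= \rank H)%N ->
  0 < se2 -> 0 < sn2 ->
  (* singular value decomposition H = U Sigma V^T *)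
  U^T *m U = 1%:M -> V^T *m V = 1%:M ->
  (forall j k, (j <= k)%N -> (k < \rank H)%N -> lam k <= lam j) ->
  (forall j, (j < \rank H)%N -> 0 < lam j) ->
  H = U *m svd_Sigma M N lam (\rank H) *m V^T ->
  let r := \rank H in
  let ytil := U^T *m y in
  (* (i) convexity of Phi on {w >= 0, z > 0} *)
  (forall (w1 w2 : 'cV[R]_N) (z1 z2 t : R),
     domP w1 z1 -> domP w2 z2 -> 0 <= t <= 1 ->
     Phi ytil lam r (t *: w1 + (1 - t) *: w2) (t * z1 + (1 - t) * z2)
       <= t * Phi ytil lam r w1 z1 + (1 - t) * Phi ytil lam r w2 z2)
  (* (ii) inf f = optimal value of (P) *)
  /\ ereal_inf [set (nll y H se2 sn2 x)%:E | x in [set: 'cV[R]_N]]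
     = ereal_inf [set e | exists (w : 'cV[R]_N) (z : R),
                     feasP se2 sn2 w z /\ e = (Phi ytil lam r w z)%:E]
  (* (iii) strong duality *)
  /\ ereal_inf [set e | exists (w : 'cV[R]_N) (z : R),
                     feasP se2 sn2 w z /\ e = (Phi ytil lam r w z)%:E]
     = ereal_sup [set e | exists (nu : R) (mu : 'cV[R]_N),
                     (forall i, 0 <= mu i 0) /\
                     e = dualfun ytil lam r se2 sn2 nu mu].
Proof.
move=> _ _ _ se2_gt0 sn2_gt0 UU VV _ lam_gt0 H_svd r ytil.
have r_le_M : (r <= M)%N := rank_leq_row H.
have r_le_N : (r <= N)%N := rank_leq_col H.
have lam_ge0 j : (j < r)%N -> 0 <= lam j by move/lam_gt0/ltW.
split; first by apply: Phi_convex.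
split; last exact: strong_duality.
by rewrite {1}H_svd; apply: inf_nll_eq_inf_Phi.
Qed.
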